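(* A graph $3$-partition $\mathscr{G}=(G_{<},G_{=},G_{>},\sigma)$ can be explained by a relaxed scenario if and only if it can be explained by a restricted scenario.
   Context: All trees are planted phylogenetic trees: a tree $T$ has a distinguished vertex $0_T$ of degree $1$ whose unique neighbor $\rho_T$ is the root, and every vertex other than $0_T$ and the leaves $L(T)$ has at least two children. For $x,y\in V(T)$ write $y\preceq_T x$ if $x$ lies on the path from $0_T$ to $y$; edges are written $uv$ with $v\prec_T u$. The order extends to $V(T)\cup E(T)$: for a vertex $x$ and an edge $e=uv$, $x\preceq_T e$ iff $x\preceq_T v$, and $e\preceq_T x$ iff $u\preceq_T x$; for edges, $uv\preceq_T ab$ iff $v\preceq_T b$. Two elements are comparable if one is $\preceq$ the other. $V^0(T)=V(T)\setminus(L(T)\cup\{0_T\})$; $\mathrm{lca}_T$ denotes the last common ancestor; $\mathrm{child}_T(u)$ is the set of children of $u$. A time map for $T$ is $\tau_T\colon V(T)\to\mathbb{R}$ with $\tau_T(x)<\tau_T(y)$ whenever $x\prec_T y$. A relaxed scenario $\mathscr{S}=(T,S,\sigma,\mu,\tau_T,\tau_S)$ consists of a gene tree $T$ with time map $\tau_T$, a species tree $S$ with time map $\tau_S$, a map $\sigma\colon L(T)\to M$ with $M\subseteq L(S)$, and a map $\mu\colon V(T)\to V(S)\cup E(S)$ such that (S0) $\mu(x)=0_S$ iff $x=0_T$; (S1) $\mu(x)\in L(S)$ iff $x\in L(T)$, in which case $\mu(x)=\sigma(x)$; (S2) if $\mu(x)\in V(S)$ then $\tau_S(\mu(x))=\tau_T(x)$;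 (S3) if $\mu(x)=uv\in E(S)$ then $\tau_S(v)<\tau_T(x)<\tau_S(u)$. The graphs $G_{=}(\mathscr{S})$, $G_{<}(\mathscr{S})$, $G_{>}(\mathscr{S})$ have vertex set $L(T)$, and for distinct $x,y$ the pair $xy$ is an edge of $G_{=}(\mathscr{S})$, $G_{<}(\mathscr{S})$, resp. $G_{>}(\mathscr{S})$ iff $\tau_T(\mathrm{lca}_T(x,y))$ is $=$, $<$, resp. $>$ than $\tau_S(\mathrm{lca}_S(\sigma(x),\sigma(y)))$. An edge $uv\in E(T)$ is an HGT-edge if $\mu(u)$ and $\mu(v)$ are incomparable in $S$. A leaf $x\in L(T)$ is a witness for $v\in V(T)$ if $x\preceq_T v$ and the path from $v$ to $x$ contains no HGT-edge. A restricted scenario is a relaxed scenario satisfying (S4) every vertex of $T$ has a witness; (S5) if $\mu(u)\in V^0(S)$ then $\mu(v)\prec_S\mu(u)$ for all $v\in\mathrm{child}_T(u)$; (S6) if $\mu(u)\in V^0(S)$ then there exist leaves $x,y\in L(T)$ with $\mathrm{lca}_T(x,y)=u$, both witnesses for $u$, and $\mu(u)=\mathrm{lca}_S(\sigma(x),\sigma(y))$. A graph $3$-partition $\mathscr{G}=(G_{<},G_{=},G_{>},\sigma)$ is an ordered tuple of three edge-disjoint graphs on a common vertex set $L$ with a coloring $\sigma\colon L\to M$ such that every unordered pair of distinct elements of $L$ is an edge of exactly one of the three graphs; it is explained by a scenario $\mathscr{S}$ (with the same $\sigma$) if $G_{<}=G_{<}(\mathscr{S})$, $G_{=}=G_{=}(\mathscr{S})$,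 $G_{>}=G_{>}(\mathscr{S})$. *)

From mathcomp Require Import all_boot all_order all_algebra.
From mathcomp Require Import reals.
Set Implicit Arguments. Unset Strict Implicit. Unset Printing Implicit Defensive.
Import Order.TTheory GRing.Theory Num.Theory.
Local Open Scope ring_scope.

(* A rooted tree on a finite vertex type V is given by a parent map [par]
   and a distinguished vertex [z] (the planting vertex 0_T), with par z = z
   by convention.  The edges are the pairs (par v, v) for v != z, so an
   edge is represented by its lower endpoint v. *)

Section Trees.
Variable V : finType.
Variables (z : V) (par : V -> V).

(* y \preceq x : x lies on the path from z to y, i.e. x is reached from y
   by iterating par. *)
Definition anc (y x : V) : bool := connect (frel par) y x.

Definition children (u : V) : {set V} := [set w | (w != u) && (par w == u)].

Definition leaves : {set V} := [set v | (v != z) && (children v == set0)].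

Definition inner (v : V) : bool := (v != z) && (v \notin leaves).

Definition planted_phylo : Prop :=
  [/\ par z = z,
      (forall v, anc v z),
      #|children z| = 1%N &
      (forall v, v != z -> v \notin leaves -> (2 <= #|children v|)%N)].

Definition is_lca (x y w : V) : bool :=
  [&& anc x w, anc y w & [forall u, (anc x u && anc y u) ==> anc w u]].
Definition lca (x y : V) : V := odflt z [pick w | is_lca x y w].

(* elements of V(T) \cup E(T): inl v = vertex v, inr v = edge (par v, v) *)
Definition is_elem (a : V + V) : bool :=
  match a with inl _ => true | inr v => v != z end.

Definition le_el (a b : V + V) : bool :=
  match a, b with
  | inl x, inl y => anc x y
  | inl x, inr v => anc x v
  | inr v, inl x => anc (par v) x
  | inr v, inr w => anc v w
  end.
Definition lt_el (a b : V + V) : bool := le_el a b && (a != b).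
Definition comparable_el (a b : V + V) : bool := le_el a b || le_el b a.

Variable R : realType.
Definition time_map (tau : V -> R) : Prop :=
  forall x y, anc x y -> x != y -> tau x < tau y.

End Trees.

(* Graph 3-partition on vertex set L (the coloring sigma is carried along). *)
Definition graph_3partition (L : finType) (Glt Geq Ggt : rel L) : Prop :=
  [/\ symmetric Glt, symmetric Geq & symmetric Ggt] /\
  [/\ irreflexive Glt, irreflexive Geq & irreflexive Ggt] /\
      (forall x y, x != y ->
         [&& Glt x y || Geq x y || Ggt x y,
             ~~ (Glt x y && Geq x y), ~~ (Glt x y && Ggt x y)
           & ~~ (Geq x y && Ggt x y)]).

Section Scenario.
Variables (R : realType) (L M : finType) (sigma : L -> M).
Variables (VT VS : finType) (zT : VT) (parT : VT -> VT) (zS : VS) (parS : VS -> VS).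
Variables (tauT : VT -> R) (tauS : VS -> R).
(* lf identifies L with the leaf set L(T); mS identifies M with a subset of L(S) *)
Variables (lf : L -> VT) (mS : M -> VS) (mu : VT -> VS + VS).

Definition relaxed_scenario : Prop :=
  [/\ planted_phylo zT parT, planted_phylo zS parS,
      time_map parT tauT & time_map parS tauS] /\
  [/\ (injective lf /\ forall v, v \in leaves zT parT <-> exists l, v = lf l),
      (injective mS /\ forall c, mS c \in leaves zS parS) &
      (forall x, is_elem zS (mu x))] /\
  [/\
      (forall x, mu x = inl zS <-> x = zT),
      ((forall x, (exists2 s, mu x = inl s & s \in leaves zS parS)
                  <-> x \in leaves zT parT)
       /\ forall l, mu (lf l) = inl (mS (sigma l))),
      (forall x s, mu x = inl s -> tauS s = tauT x) &
      (forall x v, mu x = inr v -> tauS v < tauT x < tauS (parS v))].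

Definition hgt (v : VT) : bool :=
  ~~ comparable_el parS (mu (parT v)) (mu v).

Definition witness (x v : VT) : Prop :=
  [/\ x \in leaves zT parT, anc parT x v &
      forall w, anc parT x w -> anc parT w v -> w != v -> w != zT -> ~~ hgt w].

Definition restricted_scenario : Prop :=
  [/\ relaxed_scenario,
      (* (S4) *)
      (forall v, exists x, witness x v),
      (* (S5) *)
      (forall u s, mu u = inl s -> inner zS parS s ->
         forall v, v \in children parT u -> lt_el parS (mu v) (mu u)) &
      (* (S6) *)
      (forall u s, mu u = inl s -> inner zS parS s ->
         exists x y : L, [/\ lca zT parT (lf x) (lf y) = u,
                             witness (lf x) u, witness (lf y) u &
                             s = lca zS parS (mS (sigma x)) (mS (sigma y))])].

Definition explains (Glt Geq Ggt : rel L) : Prop :=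
  forall x y, x != y ->
    let a := tauT (lca zT parT (lf x) (lf y)) in
    let b := tauS (lca zS parS (mS (sigma x)) (mS (sigma y))) in
    [/\ Glt x y = (a < b), Geq x y = (a == b) & Ggt x y = (b < a)].

End Scenario.

Definition explainable_relaxed (R : realType) (L M : finType) (sigma : L -> M)
  (Glt Geq Ggt : rel L) : Prop :=
  exists (VT VS : finType) (zT : VT) (parT : VT -> VT) (zS : VS) (parS : VS -> VS)
         (tauT : VT -> R) (tauS : VS -> R) (lf : L -> VT) (mS : M -> VS)
         (mu : VT -> VS + VS),
    relaxed_scenario sigma zT parT zS parS tauT tauS lf mS mu /\
    explains sigma zT parT zS parS tauT tauS lf mS Glt Geq Ggt.

Definition explainable_restricted (R : realType) (L M : finType) (sigma : L -> M)
  (Glt Geq Ggt : rel L) : Prop :=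
  exists (VT VS : finType) (zT : VT) (parT : VT -> VT) (zS : VS) (parS : VS -> VS)
         (tauT : VT -> R) (tauS : VS -> R) (lf : L -> VT) (mS : M -> VS)
         (mu : VT -> VS + VS),
    restricted_scenario sigma zT parT zS parS tauT tauS lf mS mu /\
    explains sigma zT parT zS parS tauT tauS lf mS Glt Geq Ggt.

From mathcomp Require Import all_boot all_order all_algebra.
From mathcomp Require Import reals.
From mathcomp Require Import lra zify.
Set Implicit Arguments. Unset Strict Implicit. Unset Printing Implicit Defensive.
Import Order.TTheory GRing.Theory Num.Theory.
Local Open Scope ring_scope.

(* Only the forward direction needs work. Let a(x,y) and b(x,y) be the times of
   lca_T(x,y) and of lca_S(sigma x, sigma y), and delta > 0 the smallest gap between
   distinct vertex times of the relaxed scenario. Then dis = max(a, b - delta/2) is an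
   ultrametric on L which compares with b exactly as a does, so the tree of its balls,
   each timed by its diameter, explains the same 3-partition. Each ball is placed on the
   species-tree lineage of a designated leaf at its time; a ball whose time hits a
   species vertex at which no two of its leaves' species meet is lifted by delta/4 onto
   an edge. Designated leaves are found by descending through chosen children, so the
   path from a ball down to its designated leaf runs along one lineage and crosses no
   HGT edge (S4). The children of a ball mapped onto an inner species vertex s lie
   strictly below s (S5), and they are chosen so that two of them have designated
   leaves whose species meet exactly at s (S6). *)

(** * Planted trees and time maps *)

Section PlantedTrees.
Variables (V : finType) (z : V) (par : V -> V).

Lemma ancP x y : reflect (exists n, iter n par x = y) (anc par x y).
Proof.
apply: (iffP idP) => [h|[n <-]]; last exact: fconnect_iter.
by exists (findex par x y); apply: iter_findex.
Qed.

Lemma anc_refl x : anc par x x.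
Proof. exact: connect0. Qed.

Lemma anc_trans x y w : anc par x y -> anc par y w -> anc par x w.
Proof. exact: connect_trans. Qed.

Lemma anc_par x : anc par x (par x).
Proof. by apply: connect1; rewrite /= eqxx. Qed.

Lemma anc_total x u w : anc par x u -> anc par x w -> anc par u w || anc par w u.
Proof.
move=> /ancP [n <-] /ancP [m <-]; case: (leqP n m) => h; apply/orP; [left|right].
  by apply/ancP; exists (m - n)%N; rewrite -iterD subnK.
by apply/ancP; exists (n - m)%N; rewrite -iterD subnK // ltnW.
Qed.

Lemma anc_par_step x y : anc par x y -> x != y -> anc par (par x) y.
Proof.
move=> /ancP [[|n] hn] hxy; first by rewrite -hn eqxx in hxy.
by apply/ancP; exists n; rewrite -iterSr.
Qed.

Lemma leaf_neq_z v : v \in leaves z par -> v != z.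
Proof. by rewrite inE => /andP []. Qed.

Hypothesis Hp : planted_phylo z par.

Lemma par_z : par z = z.
Proof. by case: Hp. Qed.

Lemma anc_z x : anc par x z.
Proof. by case: Hp. Qed.

Lemma iter_par_z n : iter n par z = z.
Proof. by elim: n => //= n ->; rewrite par_z. Qed.

Lemma periodic_z x n : iter n par x = x -> (0 < n)%N -> x = z.
Proof.
move=> hx hn; have /ancP [k hk] := anc_z x.
have hm j : iter (j * n) par x = x by elim: j => [|j IH] //=; rewrite mulSn iterD IH hx.
by rewrite -(hm k) -(subnK (leq_pmulr k hn)) iterD hk iter_par_z.
Qed.

Lemma par_fixed x : par x = x -> x = z.
Proof. by move=> hx; apply: (@periodic_z x 1). Qed.

Lemma anc_antisym x y : anc par x y -> anc par y x -> x = y.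
Proof.
move=> /ancP [[|n] hn] // /ancP [m hm].
have /periodic_z hx : iter (m + n.+1) par x = x by rewrite iterD hn hm.
by rewrite -hn hx ?addnS // iter_par_z.
Qed.

Lemma exists_is_lca x y : exists w, is_lca par x y w.
Proof.
have P0 : anc par x z && anc par y z by rewrite !anc_z.
have [w /andP [hx hy] hmax] :=
  @arg_maxnP _ z (fun w => anc par x w && anc par y w) (fun w => #|[set v | anc par w v]|) P0.
exists w; rewrite /is_lca hx hy; apply/forallP => u; apply/implyP => /andP [hux huy].
case/orP: (anc_total hx hux) => // huw; case: (eqVneq u w) => [->|hne]; first exact: anc_refl.
have hsub : [set v | anc par w v] \proper [set v | anc par u v].
  apply/properP; split; first by apply/subsetP => v; rewrite !inE; apply: anc_trans huw.
  exists u; rewrite !inE ?anc_refl //; apply/negP => hwu.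
  by move/eqP: hne; apply; apply: anc_antisym.
by have /= := hmax u; rewrite hux huy => /(_ isT); rewrite leqNgt proper_card.
Qed.

Lemma is_lca_lca x y : is_lca par x y (lca z par x y).
Proof.
rewrite /lca; case: pickP => [w //|h].
by case: (exists_is_lca x y) => w; rewrite h.
Qed.

Lemma anc_lcal x y : anc par x (lca z par x y).
Proof. by case/and3P: (is_lca_lca x y). Qed.

Lemma anc_lcar x y : anc par y (lca z par x y).
Proof. by case/and3P: (is_lca_lca x y). Qed.

Lemma lca_least x y u : anc par x u -> anc par y u -> anc par (lca z par x y) u.
Proof. by case/and3P: (is_lca_lca x y) => _ _ /forallP h hx hy; move: (h u); rewrite hx hy. Qed.

Lemma lca_unique x y w : is_lca par x y w -> lca z par x y = w.
Proof.
case/and3P => hx hy /forallP h; apply: anc_antisym; first exact: lca_least.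
by move: (h (lca z par x y)); rewrite anc_lcal anc_lcar.
Qed.

Lemma lcaC x y : lca z par x y = lca z par y x.
Proof.
apply: lca_unique; rewrite /is_lca anc_lcal anc_lcar.
by apply/forallP => u; apply/implyP => /andP [h1 h2]; apply: lca_least.
Qed.

Lemma lcaxx x : lca z par x x = x.
Proof.
by apply: lca_unique; rewrite /is_lca anc_refl; apply/forallP => u; apply/implyP => /andP [].
Qed.

Lemma anc_leaf v y : v \in leaves z par -> anc par y v -> y = v.
Proof.
rewrite inE => /andP [hvz /eqP hch] /ancP [[|n] hn] //; exfalso.
set w := iter n par y; have hpw : par w = v by rewrite /w -iterS.
case: (eqVneq w v) => hwv.
  have /par_fixed e : par w = w by rewrite hpw hwv.
  by move: hvz; rewrite -hwv e eqxx.
have : w \in children par v by rewrite inE hwv hpw eqxx.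
by rewrite hch inE.
Qed.

Lemma exists_root : exists2 rho, rho != z & forall v, v != z -> anc par v rho.
Proof.
case: Hp => _ _ /eqP /cards1P [rho hrho] _.
have : rho \in children par z by rewrite hrho inE.
rewrite inE => /andP [hrz /eqP hpr]; exists rho => // v hv.
have ex : exists n, iter n par v == z by case/ancP: (anc_z v) => n hn; exists n; apply/eqP.
case: (ex_minnP ex) => [[|n] /eqP hn hmin]; first by move: hn => /= hn; rewrite hn eqxx in hv.
set w := iter n par v; have hw : par w = z by rewrite /w -iterS.
have hwz : w != z.
  by apply/eqP => hwz; have := hmin n; rewrite -/w hwz eqxx ltnn => /(_ isT).
have : w \in children par z by rewrite inE hwz hw eqxx.
by rewrite hrho inE => /eqP <-; apply/ancP; exists n.
Qed.

Lemma lca_neq_z x y : x != z -> y != z -> lca z par x y != z.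
Proof.
move=> hx hy; case: exists_root => rho hrz hr; apply: contraNneq hrz => he.
apply/eqP/anc_antisym; first exact: anc_z.
by rewrite -he; apply: lca_least; apply: hr.
Qed.

Lemma exists_leaf : exists v, v \in leaves z par.
Proof.
case: exists_root => rho hrz _.
have [v hvz hmax] :=
  @arg_maxnP _ rho (fun v => v != z) (fun v => #|[set u | anc par v u]|) hrz.
exists v; rewrite inE hvz; apply/eqP/setP => w; rewrite !inE.
apply/negP => /andP [hwv /eqP hpw].
have hwz : w != z by apply: contraNneq hvz => e; rewrite -hpw e par_z.
have hanc : anc par w v by rewrite -hpw; apply: anc_par.
have hsub : [set u | anc par v u] \proper [set u | anc par w u].
  apply/properP; split; first by apply/subsetP => u; rewrite !inE; apply: anc_trans hanc.
  exists w; rewrite !inE ?anc_refl //; apply/negP => hvw.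
  by move/negP: hwv; apply; apply/eqP; apply: anc_antisym.
by have /= := hmax w hwz; rewrite leqNgt proper_card.
Qed.

End PlantedTrees.

Section TimeMaps.
Variables (V : finType) (z : V) (par : V -> V) (R : realType) (tau : V -> R).
Hypothesis Ht : time_map par tau.

Lemma time_map_le x y : anc par x y -> tau x <= tau y.
Proof. by move=> h; case: (eqVneq x y) => [->//|hne]; apply/ltW/Ht. Qed.

Lemma anc_of_time_le x u w : anc par x u -> anc par x w -> tau u <= tau w -> anc par u w.
Proof.
move=> hu hw hle; case/orP: (anc_total hu hw) => // hwu.
case: (eqVneq w u) => [->|hne]; first exact: anc_refl.
by have := Ht hwu hne; rewrite ltNge hle.
Qed.

Lemma anc_time_inj x u w : anc par x u -> anc par x w -> tau u = tau w -> u = w.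
Proof.
move=> hu hw he; case: (eqVneq u w) => // hne; exfalso.
have hne' : w != u by rewrite eq_sym.
by case/orP: (anc_total hu hw) => h; [have := Ht h hne | have := Ht h hne']; rewrite he ltxx.
Qed.

Hypothesis Hp : planted_phylo z par.

Lemma time_lca_ultra x y w :
  tau (lca z par x w) <= Num.max (tau (lca z par x y)) (tau (lca z par y w)).
Proof.
case/orP: (anc_total (anc_lcar Hp x y) (anc_lcal Hp y w)) => h; rewrite le_max.
  apply/orP; right; apply/time_map_le/lca_least => //; last exact: anc_lcar.
  exact: anc_trans (anc_lcal Hp x y) h.
apply/orP; left; apply/time_map_le/lca_least => //; first exact: anc_lcal.
exact: anc_trans (anc_lcar Hp y w) h.
Qed.

Lemma time_lca_lt_z x y : x != z -> y != z -> tau (lca z par x y) < tau z.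
Proof. by move=> hx hy; apply: Ht; [exact: anc_z | exact: lca_neq_z]. Qed.

Lemma time_leaf_lt_lca v y : v \in leaves z par -> y != v -> tau v < tau (lca z par v y).
Proof.
move=> hv hyv; apply: Ht; first exact: anc_lcal.
by apply: contra_neq hyv => he; apply: (anc_leaf Hp hv); rewrite {1}he anc_lcar.
Qed.

End TimeMaps.

(** * The tree of balls of an ultrametric *)

Definition ultra_dissim (R : realType) (L : finType) (c : L -> L -> R) :=
  [/\ forall x y, c x y = c y x,
      forall x y w, c x w <= Num.max (c x y) (c y w) &
      forall x y, x != y -> c x x < c x y].

Section Clusters.
Variables (R : realType) (L : finType) (c : L -> L -> R).
Hypothesis Hc : ultra_dissim c.

Let cC x y : c x y = c y x. Proof. by case: Hc => h _ _; apply: h. Qed.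
Let c_ultra x y w : c x w <= Num.max (c x y) (c y w). Proof. by case: Hc => _ h _; apply: h. Qed.
Let cxx_lt x y : x != y -> c x x < c x y. Proof. by case: Hc => _ _ h; apply: h. Qed.

Definition ball x r : {set L} := [set y | c x y <= r].

Definition cluster (A : {set L}) : bool := [exists x, exists y, A == ball x (c x y)].

(* Independent of the chosen pair on clusters, by [diam_ball]; junk value 0 elsewhere. *)
Definition diam (A : {set L}) : R :=
  if [pick p : L * L | A == ball p.1 (c p.1 p.2)] is Some p then c p.1 p.2 else 0.

Lemma clusterP A : reflect (exists x y, A = ball x (c x y)) (cluster A).
Proof.
apply: (iffP existsP) => [[x /existsP [y /eqP h]]|[x [y h]]]; first by exists x, y.
by exists x; apply/existsP; exists y; rewrite h.
Qed.

Lemma ball_recenter x y r : y \in ball x r -> ball y r = ball x r.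
Proof.
rewrite inE => hxy; apply/setP => w; rewrite !inE; apply/idP/idP => h.
  by apply: le_trans (c_ultra x y w) _; rewrite ge_max hxy.
by apply: le_trans (c_ultra y x w) _; rewrite ge_max cC hxy.
Qed.

Lemma subset_ball x r r' : r <= r' -> ball x r \subset ball x r'.
Proof. by move=> h; apply/subsetP => y; rewrite !inE => h'; apply: le_trans h' h. Qed.

Lemma mem_ball_center x y : x \in ball x (c x y).
Proof. by rewrite inE; case: (eqVneq x y) => [->//|h]; apply/ltW/cxx_lt. Qed.

Lemma mem_ball_dissim x y : y \in ball x (c x y).
Proof. by rewrite inE. Qed.

Lemma ball_dissim_le x r u v : u \in ball x r -> v \in ball x r -> c u v <= r.
Proof.
rewrite !inE => hu hv; apply: le_trans (c_ultra u x v) _.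
by rewrite ge_max cC hu hv.
Qed.

Lemma diam_ball A x y : A = ball x (c x y) -> diam A = c x y.
Proof.
move=> hA; rewrite /diam; case: pickP => [[p q] /= /eqP hp|h]; last first.
  by have := h (x, y); rewrite /= hA eqxx.
apply/eqP; rewrite eq_le; apply/andP; split.
  by apply: (ball_dissim_le (x := x)); rewrite -hA hp ?mem_ball_center ?mem_ball_dissim.
by apply: (ball_dissim_le (x := p)); rewrite -hp hA ?mem_ball_center ?mem_ball_dissim.
Qed.

Lemma cluster_inhabited A : cluster A -> exists x, x \in A.
Proof. by case/clusterP => x [y ->]; exists x; apply: mem_ball_center. Qed.

Lemma card_cluster_gt0 A : cluster A -> (0 < #|A|)%N.
Proof. by move=> /cluster_inhabited [x hx]; rewrite card_gt0; apply/set0Pn; exists x. Qed.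

Lemma cluster_ballE A x : cluster A -> x \in A -> A = ball x (diam A).
Proof.
case/clusterP => p [q hA] hx; rewrite (diam_ball hA) hA; apply/esym/ball_recenter.
by rewrite -hA.
Qed.

Lemma dissim_le_diam A u v : cluster A -> u \in A -> v \in A -> c u v <= diam A.
Proof.
by move=> hA hu hv; apply: (ball_dissim_le (x := u)); rewrite -cluster_ballE.
Qed.

Lemma diam_attained A : cluster A -> exists u v, [/\ u \in A, v \in A & c u v = diam A].
Proof.
case/clusterP => x [y hA]; exists x, y.
by rewrite (diam_ball hA) hA mem_ball_center mem_ball_dissim.
Qed.

Lemma clusters_nested A B x : cluster A -> cluster B -> x \in A -> x \in B ->
  (A \subset B) || (B \subset A).
Proof.
move=> hA hB hxA hxB; rewrite (cluster_ballE hA hxA) (cluster_ballE hB hxB).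
case: (lerP (diam A) (diam B)) => h; first by rewrite subset_ball.
by rewrite (subset_ball _ (ltW h)) orbT.
Qed.

Lemma le_diam (A B : {set L}) : cluster A -> A \subset B -> cluster B -> diam A <= diam B.
Proof.
move=> hA hs hB; case: (diam_attained hA) => u [v [hu hv <-]].
by apply: dissim_le_diam => //; apply: (subsetP hs).
Qed.

Lemma lt_diam (A B : {set L}) : cluster A -> A \proper B -> cluster B -> diam A < diam B.
Proof.
move=> hA /properP [hs [w hwB hwA]] hB; case: (cluster_inhabited hA) => x hx.
rewrite ltNge; apply: contra hwA => hle; apply: subsetP w hwB.
by rewrite (cluster_ballE hA hx) (cluster_ballE hB (subsetP hs x hx)) subset_ball.
Qed.

Lemma set1_ballE x : [set x] = ball x (c x x).
Proof.
apply/setP => y; rewrite !inE; case: (eqVneq y x) => [->|h]; first by rewrite lexx.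
by rewrite leNgt cxx_lt // eq_sym.
Qed.

Lemma cluster1 x : cluster [set x].
Proof. by apply/clusterP; exists x, x; apply: set1_ballE. Qed.

Lemma diam1 x : diam [set x] = c x x.
Proof. exact: diam_ball (set1_ballE x). Qed.

Lemma cluster_ball x y : cluster (ball x (c x y)).
Proof. by apply/clusterP; exists x, y. Qed.

Variable l0 : L.

Lemma clusterT : cluster setT.
Proof.
have [y _ hy] := @arg_maxP _ _ L l0 predT (c l0) isT.
by apply/clusterP; exists l0, y; apply/setP => w; rewrite !inE; apply/esym/(hy w).
Qed.

Definition parent_cluster (A : {set L}) : option {set L} :=
  [pick B | [&& cluster B, A \proper B &
             [forall B', cluster B' && (A \proper B') ==> (B \subset B')]]].

Lemma parent_cluster_spec A B : parent_cluster A = Some B ->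
  [/\ cluster B, A \proper B & forall B', cluster B' -> A \proper B' -> B \subset B'].
Proof.
rewrite /parent_cluster; case: pickP => // B' /and3P [h1 h2 /forallP h3] [<-].
by split => // B'' h4 h5; move: (h3 B''); rewrite h4 h5.
Qed.

Lemma parent_cluster_ex A : cluster A -> A != setT -> exists B, parent_cluster A = Some B.
Proof.
move=> hA hAT; have p0 : cluster setT && (A \proper setT) by rewrite clusterT properT.
have [B0 /andP [hcB0 hAB0] hmin] :=
  @arg_minnP _ setT (fun B => cluster B && (A \proper B)) (fun B => #|B|) p0.
rewrite /parent_cluster; case: pickP => [B _|h]; first by exists B.
exfalso; move: (h B0); rewrite hcB0 hAB0 /=; move/negP; apply; apply/forallP => B'.
apply/implyP => /[dup] hB' /andP [hcB' hAB'].
case: (cluster_inhabited hA) => x hx.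
have hxB0 := subsetP (proper_sub hAB0) x hx; have hxB' := subsetP (proper_sub hAB') x hx.
case/orP: (clusters_nested hcB0 hcB' hxB0 hxB') => // hs.
case: (eqVneq B' B0) => [->|hne]; first exact: subxx.
have /proper_card : B' \proper B0 by rewrite properEneq hne hs.
by rewrite ltnNge hmin.
Qed.

Lemma parent_clusterT : parent_cluster setT = None.
Proof.
rewrite /parent_cluster; case: pickP => // B /and3P [_ h _].
by move: h; rewrite properE subsetT andbF.
Qed.

Lemma parent_cluster_None A : cluster A -> parent_cluster A = None -> A = setT.
Proof.
move=> hA h; apply/eqP; apply: contraT => hAT.
by case: (parent_cluster_ex hA hAT) => B; rewrite h.
Qed.

Lemma sub_child_cluster A B C x : parent_cluster C = Some A -> cluster C -> cluster B ->
  x \in B -> x \in C -> B \proper A -> B \subset C.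
Proof.
move=> /parent_cluster_spec [hA hCA hmin] hC hB hxB hxC hBA.
case/orP: (clusters_nested hB hC hxB hxC) => // hCB.
case: (eqVneq C B) => [->|hne]; first exact: subxx.
have /(hmin B hB) hAB : C \proper B by rewrite properEneq hne hCB.
by move: hBA; rewrite properE hAB andbF.
Qed.

Lemma child_clusters_eq A C1 C2 x :
  parent_cluster C1 = Some A -> parent_cluster C2 = Some A -> cluster C1 -> cluster C2 ->
  x \in C1 -> x \in C2 -> C1 = C2.
Proof.
move=> h1 h2 hc1 hc2 hx1 hx2.
have [_ hp1 _] := parent_cluster_spec h1; have [_ hp2 _] := parent_cluster_spec h2.
by apply/eqP; rewrite eqEsubset (sub_child_cluster h2 hc2 hc1 hx1 hx2 hp1)
  (sub_child_cluster h1 hc1 hc2 hx2 hx1 hp2).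
Qed.

Lemma exists_child_cluster A x : cluster A -> x \in A -> (1 < #|A|)%N ->
  exists C, [/\ cluster C, parent_cluster C = Some A & x \in C].
Proof.
move=> hA hx hc.
have P0 : [&& cluster [set x], x \in [set x] & [set x] \proper A].
  by rewrite cluster1 set11 properEcard sub1set hx cards1.
have [C /and3P [hcC hxC hCA] hmax] :=
  @arg_maxnP _ [set x] (fun C => [&& cluster C, x \in C & C \proper A]) (fun C => #|C|) P0.
have hCT : C != setT by apply: contraTneq hCA => ->; rewrite properE subsetT andbF.
case: (parent_cluster_ex hcC hCT) => B hB; exists C; split => //.
have [hcB hCB hmin] := parent_cluster_spec hB.
rewrite hB; case: (eqVneq B A) => [->//|hne].
have hBA : B \proper A by rewrite properEneq hne hmin.
have /= := hmax B; rewrite hcB hBA (subsetP (proper_sub hCB) x hxC) => /(_ isT).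
by rewrite leqNgt proper_card.
Qed.

Lemma ball_distinct_children A C1 C2 x y :
  parent_cluster C1 = Some A -> parent_cluster C2 = Some A -> cluster C1 -> cluster C2 ->
  C1 != C2 -> x \in C1 -> y \in C2 -> ball x (c x y) = A.
Proof.
move=> hp1 hp2 hC1 hC2 hne hx hy.
have [hA hC1A _] := parent_cluster_spec hp1; have [_ hC2A _] := parent_cluster_spec hp2.
have hxA := subsetP (proper_sub hC1A) x hx; have hyA := subsetP (proper_sub hC2A) y hy.
have hBA : ball x (c x y) \subset A.
  by rewrite (cluster_ballE hA hxA) subset_ball // dissim_le_diam.
apply/eqP; rewrite eqEsubset hBA; apply: contraNT hne => hAB.
have hpB : ball x (c x y) \proper A by rewrite properE hBA hAB.
have hsub := sub_child_cluster hp1 hC1 (cluster_ball x y) (mem_ball_center x y) hx hpB.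
have hyC1 := subsetP hsub y (mem_ball_dissim x y).
by apply/eqP; apply: child_clusters_eq hp1 hp2 hC1 hC2 hyC1 hy.
Qed.

Lemma two_child_clusters A : cluster A -> (1 < #|A|)%N ->
  exists C1 C2, [/\ C1 != C2, cluster C1, cluster C2, parent_cluster C1 = Some A
                  & parent_cluster C2 = Some A].
Proof.
move=> hA hc; case: (cluster_inhabited hA) => x hx.
have [C1 [hC1 hp1 _]] := exists_child_cluster hA hx hc.
have [_ /properP [_ [w hwA hwC1]] _] := parent_cluster_spec hp1.
have [C2 [hC2 hp2 hw2]] := exists_child_cluster hA hwA hc.
by exists C1, C2; split => //; apply: contraNneq hwC1 => ->.
Qed.

Definition cnode := {A : {set L} | cluster A}.

(* [None] is the planting vertex 0_T. *)
Definition ctree := option cnode.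

Definition node (A : {set L}) : ctree := insub A.

Definition cpar (v : ctree) : ctree :=
  if v is Some A then obind insub (parent_cluster (val A)) else None.

Lemma node_val A : cluster A -> exists a : cnode, node A = Some a /\ val a = A.
Proof. by move=> h; rewrite /node insubT /=; eexists; split. Qed.

Lemma cparE (A : cnode) B : parent_cluster (val A) = Some B -> cpar (Some A) = node B.
Proof. by move=> h; rewrite /= h. Qed.

Lemma cparP (A : cnode) :
  (val A = setT /\ cpar (Some A) = None) \/
  exists P : cnode, [/\ cpar (Some A) = Some P, parent_cluster (val A) = Some (val P)
                      & val A \proper val P].
Proof.
case hp: (parent_cluster (val A)) => [P|]; last first.
  by left; have h := parent_cluster_None (valP A) hp; rewrite /= hp.
have [hcP hAP _] := parent_cluster_spec hp; have [p [hp' hpv]] := node_val hcP.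
by right; exists p; rewrite (cparE hp) hp' hpv.
Qed.

Lemma iter_cpar_None n : iter n cpar None = None.
Proof. by elim: n => //= n ->. Qed.

Lemma anc_cpar_subset (A B : cnode) : anc cpar (Some A) (Some B) -> val A \subset val B.
Proof.
move=> /ancP [n]; elim: n A => [|n IH] A; first by move=> [->].
rewrite iterSr; case: (cparP A) => [[_ ->]|[P [-> _ hAP]]]; first by rewrite iter_cpar_None.
by move/IH; apply: subset_trans (proper_sub hAP).
Qed.

Lemma subset_anc_cpar (A B : cnode) : val A \subset val B -> anc cpar (Some A) (Some B).
Proof.
have [n] := ubnP #|~: val A|; elim: n A => // n IH A hn hs.
case: (eqVneq (val A) (val B)) => [/val_inj ->|hne]; first exact: anc_refl.
have hAB : val A \proper val B by rewrite properEneq hne hs.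
case: (cparP A) => [[hT _]|[P [hP hp hAP]]].
  by move: hAB; rewrite hT properE subsetT andbF.
apply: (@anc_trans _ _ _ (Some P)); first by rewrite -hP; apply: anc_par.
have [_ _ hmin] := parent_cluster_spec hp.
apply: IH; last exact: hmin _ (valP B) hAB.
have /proper_card : ~: val P \proper ~: val A by rewrite properC.
by move: hn; lia.
Qed.

Definition ctop : cnode := exist _ setT clusterT.

Lemma cpar_ctop : cpar (Some ctop) = None.
Proof. by rewrite /= parent_clusterT. Qed.

Lemma anc_cpar_None v : anc cpar v None.
Proof.
case: v => [A|]; last exact: anc_refl.
apply: anc_trans (subset_anc_cpar (B := ctop) (subsetT _)) _.
by rewrite -cpar_ctop; apply: anc_par.
Qed.

Lemma None_notin_children v : None \notin children cpar v.
Proof. by rewrite inE /= andbC; case: v. Qed.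

Lemma children_cpar (A C : cnode) :
  (Some C \in children cpar (Some A)) = (parent_cluster (val C) == Some (val A)).
Proof.
rewrite inE; case: (cparP C) => [[hT ->]|[P [-> -> hs]]].
  by rewrite /= andbF hT parent_clusterT.
apply/idP/idP => [/andP [_ /eqP [->]] //|/eqP [/val_inj e]]; subst P.
by rewrite eqxx andbT; apply: contraTneq hs => [[->]]; rewrite properxx.
Qed.

Lemma leaves_cpar (A : cnode) : (Some A \in leaves None cpar) = (#|val A| == 1%N).
Proof.
have hA0 := card_cluster_gt0 (valP A).
rewrite inE /=; apply/eqP/eqP => h.
  apply/eqP; rewrite eqn_leq hA0 andbT leqNgt; apply/negP => hc.
  case: (cluster_inhabited (valP A)) => x hx.
  have [C [hC hp _]] := exists_child_cluster (valP A) hx hc.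
  have [cc [hcc hccv]] := node_val hC.
  have : Some cc \in children cpar (Some A) by rewrite children_cpar hccv hp.
  by rewrite h inE.
apply/eqP; rewrite -subset0; apply/subsetP => [[C|]] hv; last first.
  by rewrite (negbTE (None_notin_children _)) in hv.
rewrite children_cpar in hv; have [_ /proper_card hc _] := parent_cluster_spec (eqP hv).
case: (cluster_inhabited (valP C)) => x.
by move: hc; rewrite h ltnS leqn0 cards_eq0 => /eqP ->; rewrite inE.
Qed.

Lemma planted_cpar : planted_phylo None cpar.
Proof.
split => //; first exact: anc_cpar_None.
  apply/eqP/cards1P; exists (Some ctop); apply/setP => [[A|]]; rewrite !inE //.
  case: (cparP A) => [[hT ->]|[P [-> _ hs]]].
    by rewrite eqxx; apply/esym/eqP; congr Some; apply: val_inj.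
  rewrite andbF; apply/esym/negbTE; apply: contraTneq hs => [[->]].
  by rewrite properE subsetT andbF.
move=> [A|] // _; rewrite leaves_cpar => hA.
have hc : (1 < #|val A|)%N.
  by rewrite ltn_neqAle eq_sym hA; apply: card_cluster_gt0 (valP A).
have [C1 [C2 [hne hC1 hC2 hp1 hp2]]] := two_child_clusters (valP A) hc.
have [c1 [hc1 hc1v]] := node_val hC1; have [c2 [hc2 hc2v]] := node_val hC2.
have hsub : [set Some c1; Some c2] \subset children cpar (Some A).
  by apply/subsetP => v /set2P [] ->; rewrite children_cpar ?hc1v ?hc2v ?hp1 ?hp2.
have hne' : Some c1 != Some c2 by apply: contraNneq hne => [[e]]; rewrite -hc1v -hc2v e.
by move: (subset_leq_card hsub); rewrite cards2 hne'.
Qed.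

Lemma lca_cpar_node1 x y : lca None cpar (node [set x]) (node [set y]) = node (ball x (c x y)).
Proof.
have [a [-> hav]] := node_val (cluster1 x); have [b [-> hbv]] := node_val (cluster1 y).
have [w [-> hwv]] := node_val (cluster_ball x y).
apply: (lca_unique planted_cpar).
rewrite /is_lca !subset_anc_cpar ?hav ?hbv ?hwv ?sub1set ?mem_ball_center ?mem_ball_dissim //=.
apply/forallP => [[B|]]; apply/implyP => /andP [h1 h2]; last exact: anc_cpar_None.
apply: subset_anc_cpar; move: (anc_cpar_subset h1) (anc_cpar_subset h2).
rewrite hav hbv hwv !sub1set => hxB hyB.
rewrite (cluster_ballE (valP B) hxB) subset_ball //.
exact: dissim_le_diam (valP B) hxB hyB.
Qed.

Variables (top : R) (f : {set L} -> R).
Hypothesis f_lt_proper : forall A B, cluster A -> cluster B -> A \proper B ->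
  diam A + f A < diam B + f B.
Hypothesis f_lt_top : forall A, cluster A -> diam A + f A < top.

Definition ctime (v : ctree) : R := if v is Some A then diam (val A) + f (val A) else top.

Lemma time_map_ctime : time_map cpar ctime.
Proof.
move=> [A|] [B|] h hne /=.
- apply: f_lt_proper (valP A) (valP B) _; rewrite properEneq anc_cpar_subset // andbT.
  by apply: contraNneq hne => /val_inj ->.
- exact: f_lt_top (valP A).
- by case/ancP: h => n; rewrite iter_cpar_None.
- by rewrite eqxx in hne.
Qed.

End Clusters.

Section Descent.
Variables (R : realType) (L : finType) (c : L -> L -> R).
Hypothesis Hc : ultra_dissim c.
Variable l0 : L.
Variable step : {set L} -> {set L}.
Hypothesis step_child : forall C, cluster c C -> (1 < #|C|)%N ->
  cluster c (step C) /\ parent_cluster c (step C) = Some C.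
Hypothesis step1 : forall C : {set L}, #|C| = 1%N -> step C = C.

(* [#|L|] steps suffice to reach a singleton. *)
Definition descend C := iter #|L| step C.

Definition dleaf C : L := odflt l0 [pick x in descend C].

Lemma iter_step n C : cluster c C ->
  [/\ cluster c (iter n step C), iter n step C \subset C
    & (#|iter n step C| <= maxn 1 (#|C| - n))%N].
Proof.
move=> hC; elim: n => [|n [h1 h2 h3]] /=; first by rewrite subn0 subxx hC; split => //; lia.
set D := iter n step C in h1 h2 h3 *.
case: (ltnP 1 #|D|) => hc.
  have [hk /parent_cluster_spec [_ hp _]] := step_child h1 hc; split => //.
    exact: subset_trans (proper_sub hp) h2.
  by have := proper_card hp; move: h3; lia.
have e : #|D| = 1%N by apply/eqP; rewrite eqn_leq hc (card_cluster_gt0 Hc).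
by rewrite step1 // e; split => //; lia.
Qed.

Lemma descend_spec C : cluster c C -> descend C = [set dleaf C] /\ descend C \subset C.
Proof.
move=> hC; have [h1 h2 h3] := iter_step #|L| hC; split => //.
have /cards1P [x hx] : #|descend C| == 1%N.
  by rewrite eqn_leq (card_cluster_gt0 Hc) // andbT; apply: leq_trans h3 _; have := max_card C; lia.
by rewrite /dleaf hx; case: pickP => [y|/(_ x)]; rewrite !inE ?eqxx // => /eqP ->.
Qed.

Lemma mem_dleaf C : cluster c C -> dleaf C \in C.
Proof. by move=> /descend_spec [h1 /subsetP]; apply; rewrite h1 set11. Qed.

Lemma dleaf_step C : cluster c C -> dleaf (step C) = dleaf C.
Proof.
move=> hC; rewrite /dleaf /descend -iterSr iterS step1 //.
by have [h _] := descend_spec hC; move: h; rewrite /descend => ->; rewrite cards1.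
Qed.

Lemma dleaf1 x : dleaf [set x] = x.
Proof. by have := mem_dleaf (cluster1 Hc x); rewrite inE => /eqP. Qed.

Lemma dleaf_sub C B : cluster c C -> cluster c B -> B \subset C -> dleaf C \in B ->
  dleaf B = dleaf C.
Proof.
have [n] := ubnP #|C|; elim: n C => // n IH C hn hC hB hs hx.
case: (eqVneq B C) => [->//|hne].
have hp : B \proper C by rewrite properEneq hne hs.
have hc : (1 < #|C|)%N by have := proper_card hp; have := card_cluster_gt0 Hc hB; lia.
have [hk hpar] := step_child hC hc; have [_ hpk _] := parent_cluster_spec hpar.
have hxk : dleaf C \in step C by rewrite -dleaf_step //; apply: mem_dleaf.
rewrite -(dleaf_step hC); apply: IH; rewrite ?dleaf_step //.
  by have := proper_card hpk; lia.
exact: (sub_child_cluster Hc hpar hk hB hx hxk hp).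
Qed.

End Descent.

(** * Lineages *)

Section Lineage.
Variables (R : realType) (V : finType) (z : V) (par : V -> V) (tau : V -> R).
Hypothesis Hp : planted_phylo z par.
Hypothesis Ht : time_map par tau.

(* Junk value [inl z] when [t] lies outside [tau m, tau z]. *)
Definition lineage (t : R) (m : V) : V + V :=
  if [pick s | anc par m s && (tau s == t)] is Some s then inl s
  else if [pick v | [&& anc par m v, v != z, tau v < t & t < tau (par v)]] is Some v
  then inr v else inl z.

Lemma lineage_vertex m s : anc par m s -> lineage (tau s) m = inl s.
Proof.
move=> h; rewrite /lineage; case: pickP => [s' /andP [h1 /eqP h2]|hn].
  by congr inl; apply: (anc_time_inj Ht h1 h).
by have := hn s; rewrite h eqxx.
Qed.

Lemma lineageP m t : tau m <= t -> t < tau z ->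
  (exists s, [/\ lineage t m = inl s, anc par m s & tau s = t]) \/
  (exists v, [/\ lineage t m = inr v, anc par m v, v != z, tau v < t & t < tau (par v)]).
Proof.
move=> h1 h2; rewrite /lineage; case: pickP => [s /andP [hs /eqP ht]|hn].
  by left; exists s.
case: pickP => [v /and4P [hv hvz hvt htv]|hn2]; first by right; exists v.
exfalso.
have P0 : anc par m m && (tau m <= t) by rewrite anc_refl h1.
have [v /andP [hv hvt] hmax] := @arg_maxP _ _ V m (fun v => anc par m v && (tau v <= t)) tau P0.
have hvz : v != z by apply: contraTneq hvt => ->; rewrite -ltNge.
have hvt' : tau v < t.
  by rewrite lt_neqAle hvt andbT; apply: contraFN (hn v) => /eqP <-; rewrite hv eqxx.
have hpv : anc par m (par v) := anc_trans hv (anc_par par v).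
have htp : t < tau (par v).
  rewrite ltNge; apply/negP => hle.
  have hne : v != par v by apply: contraNneq hvz => e; apply/eqP/(par_fixed Hp); rewrite -e.
  have hge : tau (par v) <= tau v by apply: hmax; rewrite hpv hle.
  by have := Ht (anc_par par v) hne; rewrite ltNge hge.
by have := hn2 v; rewrite hv hvz hvt' htp.
Qed.

Lemma le_lineage m t s : tau m <= t -> t < tau z -> anc par m s -> t <= tau s ->
  le_el par (lineage t m) (inl s).
Proof.
move=> h1 h2 hs hts.
case: (lineageP h1 h2) => [[s1 [-> hs1 ht1]]|[v [-> hv hvz hvt htv]]] /=.
  by apply: (anc_of_time_le Ht hs1 hs); rewrite ht1.
case/orP: (anc_total hv hs) => hvs.
  case: (eqVneq v s) => [e|hne]; last exact: anc_par_step.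
  by subst v; move: hvt; rewrite ltNge hts.
by have := time_map_le Ht hvs; rewrite leNgt (lt_le_trans hvt hts).
Qed.

Lemma lt_lineage m t s : tau m <= t -> t < tau z -> anc par m s -> t < tau s ->
  lt_el par (lineage t m) (inl s).
Proof.
move=> h1 h2 hs hts; rewrite /lt_el (le_lineage h1 h2 hs (ltW hts)) /=.
case: (lineageP h1 h2) => [[s1 [-> hs1 ht1]]|[v [-> _ _ _ _]]] //.
by apply: contraTneq hts => [[<-]]; rewrite ht1 ltxx.
Qed.

Lemma lineage_mono m t1 t2 : tau m <= t1 -> t1 <= t2 -> t2 < tau z ->
  le_el par (lineage t1 m) (lineage t2 m).
Proof.
move=> h1 h12 h2.
have h1' : tau m <= t2 := le_trans h1 h12; have h2' : t1 < tau z := le_lt_trans h12 h2.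
case: (lineageP h1' h2) => [[s2 [-> hs2 ht2]]|[v2 [-> hv2 hvz2 hvt2 htv2]]].
  by apply: le_lineage => //; rewrite ht2.
case: (lineageP h1 h2') => [[s1 [-> hs1 ht1]]|[v1 [-> hv1 hvz1 hvt1 htv1]]] /=.
  case/orP: (anc_total hs1 hv2) => // h.
  case: (eqVneq v2 s1) => [->|hne]; first exact: anc_refl.
  have := time_map_le Ht (anc_par_step h hne).
  by rewrite leNgt ht1 (le_lt_trans h12 htv2).
case/orP: (anc_total hv1 hv2) => // h.
case: (eqVneq v2 v1) => [->|hne]; first exact: anc_refl.
have := time_map_le Ht (anc_par_step h hne).
by rewrite leNgt (lt_trans (lt_le_trans hvt1 h12) htv2).
Qed.

Lemma lineage_le_z m t : tau m <= t -> t < tau z -> le_el par (lineage t m) (inl z).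
Proof.
by move=> h1 h2; case: (lineageP h1 h2) => [[s [-> _ _]]|[v [-> _ _ _ _]]]; apply: anc_z.
Qed.

End Lineage.

(** * From a relaxed to a restricted scenario *)

Lemma exists_min_gap (R : realType) (T : finType) (t : T -> R) :
  exists2 delta, 0 < delta & forall p q, t p < t q -> t p + delta <= t q.
Proof.
case: (pickP (fun pq : T * T => t pq.1 < t pq.2)) => [pq0 h0|none]; last first.
  by exists 1 => // p q h; have := none (p, q); rewrite /= h.
have [[p q] /= hpq hmin] := @arg_minP _ _ _ pq0 (fun pq => t pq.1 < t pq.2)
  (fun pq => t pq.2 - t pq.1) h0.
exists (t q - t p); first by rewrite subr_gt0.
by move=> u v /(hmin (u, v)) /=; rewrite lerBrDl addrC.
Qed.

Lemma cmp_transfer (R : realDomainType) (a b t : R) :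
  (a < b -> t < b) -> (b < a -> b < t) -> (a = b -> t = b) ->
  [/\ (t < b) = (a < b), (t == b) = (a == b) & (b < t) = (b < a)].
Proof.
move=> h1 h2 h3; case: (ltrgtP a b) => hab.
- by have ht := h1 hab; rewrite ht (lt_eqF ht) (lt_gtF ht).
- by have ht := h2 hab; rewrite ht (gt_eqF ht) (lt_gtF ht).
- by rewrite (h3 hab) ltxx eqxx.
Qed.

Section Restriction.
Variables (R : realType) (L M : finType) (sigma : L -> M).
Variables (VT VS : finType) (zT : VT) (parT : VT -> VT) (zS : VS) (parS : VS -> VS).
Variables (tauT : VT -> R) (tauS : VS -> R) (lf : L -> VT) (mS : M -> VS).
Variable mu : VT -> VS + VS.
Hypothesis Hrel : relaxed_scenario sigma zT parT zS parS tauT tauS lf mS mu.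

Definition is_time (u : R) := (exists v, u = tauT v) \/ (exists s, u = tauS s).

Variable delta : R.
Hypothesis delta_gt0 : 0 < delta.
Hypothesis Hgap : forall u v, is_time u -> is_time v -> u < v -> u + delta <= v.
Variable l0 : L.

Let HpT : planted_phylo zT parT. Proof. by case: Hrel => [[h _ _ _] _]. Qed.
Let HpS : planted_phylo zS parS. Proof. by case: Hrel => [[_ h _ _] _]. Qed.
Let HtT : time_map parT tauT. Proof. by case: Hrel => [[_ _ h _] _]. Qed.
Let HtS : time_map parS tauS. Proof. by case: Hrel => [[_ _ _ h] _]. Qed.
Let lf_inj : injective lf. Proof. by case: Hrel => _ [[[h _] _ _] _]. Qed.
Let lf_leaf l : lf l \in leaves zT parT.
Proof. by case: Hrel => _ [[[_ h] _ _] _]; apply/(h (lf l)); exists l. Qed.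
Let mS_inj : injective mS. Proof. by case: Hrel => _ [[_ [h _] _] _]. Qed.
Let mS_leaf m : mS m \in leaves zS parS.
Proof. by case: Hrel => _ [[_ [_ h] _] _]. Qed.
Let mu_lf l : mu (lf l) = inl (mS (sigma l)).
Proof. by case: Hrel => _ [_ [_ [_ h] _ _]]. Qed.
Let mu_time x s : mu x = inl s -> tauS s = tauT x.
Proof. by case: Hrel => _ [_ [_ _ h _]]; apply: h. Qed.
Let mu_zT : mu zT = inl zS.
Proof. by case: Hrel => _ [_ [h _ _ _]]; apply/h. Qed.

Lemma tauT_zT : tauT zT = tauS zS.
Proof. by rewrite (mu_time mu_zT). Qed.

Lemma tauT_lf l : tauT (lf l) = tauS (mS (sigma l)).
Proof. by rewrite (mu_time (mu_lf l)). Qed.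

Local Notation a x y := (tauT (lca zT parT (lf x) (lf y))).
Local Notation b x y := (tauS (lca zS parS (mS (sigma x)) (mS (sigma y)))).
Local Notation eps := (delta / 2).
Local Notation eta := (delta / 4).

Definition dis x y := Num.max (a x y) (b x y - eps).

Lemma eps_gt0 : 0 < eps. Proof. by have := delta_gt0; lra. Qed.
Lemma eta_gt0 : 0 < eta. Proof. by have := delta_gt0; lra. Qed.
Lemma eta_lt_eps : eta < eps. Proof. by have := delta_gt0; lra. Qed.
Lemma eps_lt_delta : eps < delta. Proof. by have := delta_gt0; lra. Qed.

Lemma aC x y : a x y = a y x. Proof. by rewrite (lcaC HpT). Qed.
Lemma bC x y : b x y = b y x. Proof. by rewrite (lcaC HpS). Qed.

Lemma a_ultra x y w : a x w <= Num.max (a x y) (a y w).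
Proof. exact: time_lca_ultra. Qed.

Lemma b_ultra x y w : b x w <= Num.max (b x y) (b y w).
Proof. exact: time_lca_ultra. Qed.

Lemma b_lt_trans t x y w : b x y < t -> b y w < t -> b x w < t.
Proof. by move=> h1 h2; apply: le_lt_trans (b_ultra x y w) _; rewrite gt_max h1 h2. Qed.

Lemma axx x : a x x = tauT (lf x). Proof. by rewrite (lcaxx HpT). Qed.
Lemma bxx x : b x x = tauT (lf x). Proof. by rewrite (lcaxx HpS) tauT_lf. Qed.

Lemma axx_lt x y : x != y -> a x x < a x y.
Proof.
move=> h; rewrite axx; apply: (time_leaf_lt_lca HtT HpT (lf_leaf x)).
by apply: contraNneq h => /lf_inj ->.
Qed.

Lemma a_lt_root x y : a x y < tauS zS.
Proof. by rewrite -tauT_zT; apply: (time_lca_lt_z HtT HpT); apply/leaf_neq_z/lf_leaf. Qed.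

Lemma b_lt_root x y : b x y < tauS zS.
Proof. by apply: (time_lca_lt_z HtS HpS); apply/leaf_neq_z/mS_leaf. Qed.

Lemma is_time_a x y : is_time (a x y). Proof. by left; eexists. Qed.
Lemma is_time_b x y : is_time (b x y). Proof. by right; eexists. Qed.
Lemma is_time_S s : is_time (tauS s). Proof. by right; eexists. Qed.

Lemma dis_cases x y : dis x y = a x y \/ dis x y = b x y - eps.
Proof. by rewrite /dis; case: (lerP (a x y) (b x y - eps)) => h; [right|left]. Qed.

Lemma a_le_dis x y : a x y <= dis x y. Proof. by rewrite le_max lexx. Qed.
Lemma b_le_dis x y : b x y - eps <= dis x y. Proof. by rewrite le_max lexx orbT. Qed.

Lemma disC x y : dis x y = dis y x. Proof. by rewrite /dis aC bC. Qed.

Lemma dis_ultra x y w : dis x w <= Num.max (dis x y) (dis y w).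
Proof.
have h1 := a_ultra x y w; have h2 := b_ultra x y w.
have h2' : b x w - eps <= Num.max (b x y - eps) (b y w - eps).
  by move: h2; rewrite !le_max !lerD2r.
rewrite /dis ge_max; apply/andP; split.
  by apply: le_trans h1 _; rewrite ge_max !le_max !lexx !orbT.
by apply: le_trans h2' _; rewrite ge_max !le_max !lexx !orbT.
Qed.

Lemma disxx x : dis x x = tauT (lf x).
Proof. by rewrite /dis axx bxx; apply/max_idPl; have := eps_gt0; lra. Qed.

Lemma disxx_lt x y : x != y -> dis x x < dis x y.
Proof. by move=> h; rewrite disxx -axx; apply: lt_le_trans (axx_lt h) (a_le_dis x y). Qed.

Lemma ultra_dissim_dis : ultra_dissim dis.
Proof. by split; [exact: disC | exact: dis_ultra | exact: disxx_lt]. Qed.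

Lemma shifted_gap u v e1 e2 : is_time u -> is_time v ->
  e1 = 0 \/ e1 = eps -> e2 = 0 \/ e2 = eps -> u - e1 < v - e2 -> u - e1 + eps <= v - e2.
Proof.
move=> hu hv he1 he2 h; have := delta_gt0.
case: (ltrgtP u v) => huv.
- by have := Hgap hu hv huv; case: he1 h => ->; case: he2 => ->; lra.
- by have := Hgap hv hu huv; case: he1 h => ->; case: he2 => ->; lra.
- by subst v; case: he1 h => ->; case: he2 => ->; lra.
Qed.

Lemma dis_time x y : exists u e, [/\ is_time u, e = 0 \/ e = eps & dis x y = u - e].
Proof.
case: (dis_cases x y) => ->.
  by exists (a x y), 0; rewrite subr0; split=> //; [exact: is_time_a | left].
by exists (b x y), eps; split=> //; [exact: is_time_b | right].
Qed.

Local Notation cl := (cluster dis).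
Local Notation dm := (diam dis).

Lemma diam_dis A : cl A -> exists x y, dm A = dis x y.
Proof. by move=> /(diam_attained ultra_dissim_dis) [x [y [_ _ <-]]]; exists x, y. Qed.

Lemma diam_gap A B : cl A -> cl B -> dm A < dm B -> dm A + eps <= dm B.
Proof.
move=> /diam_dis [x [y ->]] /diam_dis [x' [y' ->]].
have [u [e1 [hu he1 ->]]] := dis_time x y; have [v [e2 [hv he2 ->]]] := dis_time x' y'.
exact: shifted_gap.
Qed.

Lemma diam_lt_root A : cl A -> dm A + eta < tauS zS.
Proof.
move=> /diam_dis [x [y ->]]; have := eta_lt_eps; have := eps_lt_delta; have := eta_gt0.
case: (dis_cases x y) => ->.
  by have := Hgap (is_time_a x y) (is_time_S zS) (a_lt_root x y); lra.
by have := Hgap (is_time_b x y) (is_time_S zS) (b_lt_root x y); lra.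
Qed.

Lemma b_le_diam A s x y : cl A -> tauS s = dm A -> x \in A -> y \in A -> b x y <= dm A.
Proof.
move=> hA hs hx hy; have h1 := dissim_le_diam ultra_dissim_dis hA hx hy.
have h2 := b_le_dis x y; rewrite leNgt; apply/negP => hlt.
have := Hgap (is_time_S s) (is_time_b x y); rewrite hs => /(_ hlt).
by have := eps_lt_delta; lra.
Qed.

Lemma disxx_lt_diam A x : cl A -> (1 < #|A|)%N -> x \in A -> dis x x < dm A.
Proof.
move=> hA /card_gt1P [p [q [hp hq hpq]]] hx.
have [y hy hxy] : exists2 y, y \in A & x != y.
  by case: (eqVneq x p) => [->|]; [exists q | exists p].
exact: lt_le_trans (disxx_lt hxy) (dissim_le_diam ultra_dissim_dis hA hx hy).
Qed.

(* A cluster whose diameter is the time of a species vertex at which no two of its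
   leaves' species meet is lifted by [eta], onto an edge of the species tree. *)
Definition shifted (A : {set L}) : bool :=
  [exists s, tauS s == dm A] && [forall x in A, forall y in A, b x y < dm A].

Definition lift (A : {set L}) : R := if shifted A then eta else 0.

Lemma lift_bounds A : 0 <= lift A <= eta.
Proof. by rewrite /lift; case: (shifted A); have := eta_gt0; lra. Qed.

Lemma lift_lt_proper A B : cl A -> cl B -> A \proper B -> dm A + lift A < dm B + lift B.
Proof.
move=> hA hB hp; have h := lt_diam ultra_dissim_dis hA hp hB.
have := diam_gap hA hB h; have := lift_bounds A; have := lift_bounds B; have := eta_lt_eps.
lra.
Qed.

Lemma lift_lt_root A : cl A -> dm A + lift A < tauS zS.
Proof. by move=> hA; have := diam_lt_root hA; have := lift_bounds A; lra. Qed.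

Lemma shifted_off_species A s : shifted A -> tauS s != dm A + eta.
Proof.
case/andP => /existsP [s0 /eqP h0] _; apply/eqP => h.
have hlt : tauS s0 < tauS s by rewrite h h0; have := eta_gt0; lra.
by have := Hgap (is_time_S s0) (is_time_S s) hlt; rewrite h h0; have := delta_gt0; lra.
Qed.

Lemma shifted1 x : shifted [set x] = false.
Proof.
apply/negP => /andP [_ /forall_inP /(_ x (set11 x)) /forall_inP /(_ x (set11 x))].
by rewrite (diam1 ultra_dissim_dis) disxx bxx ltxx.
Qed.

Definition child (C A : {set L}) : bool := cl C && (parent_cluster dis C == Some A).
(* When [A] is mapped onto a species vertex, [b x y = dm A] says that the species
   of [x] and [y] meet exactly there. *)
Definition spans (C A : {set L}) : bool := [exists x in C, exists y in C, b x y == dm A].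

Definition ref_child (A : {set L}) : {set L} :=
  if [pick C | child C A && ~~ spans C A] is Some C then C else odflt A [pick C | child C A].

Definition ref_set (A : {set L}) : {set L} :=
  if spans (ref_child A) A then ref_child (ref_child A) else ref_child A.

(* At a cluster [A] mapped onto a species vertex, [dleaf (ref_child A)] lies in
   [ref_set A], where no two species meet at [dm A]; any other child containing such a
   pair descends to a grandchild meeting [ref_set A] at [dm A], so that its designated
   leaf is a partner for that of [ref_child A] in (S6). *)
Definition step (C : {set L}) : {set L} :=
  if parent_cluster dis C is Some A then
    if spans C A && (C != ref_child A) then
      odflt (ref_child C)
        [pick D | child D C && [exists x in D, exists y in ref_set A, b x y == dm A]]
    else ref_child C
  else ref_child C.

Lemma childP C A : child C A -> [/\ cl C, cl A & C \proper A].
Proof. by case/andP => hC /eqP /parent_cluster_spec [hA hp _]. Qed.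

Lemma exists_child A : cl A -> (1 < #|A|)%N -> exists C, child C A.
Proof.
move=> hA hc; case: (cluster_inhabited ultra_dissim_dis hA) => x hx.
have [C [h1 h2 _]] := exists_child_cluster ultra_dissim_dis l0 hA hx hc.
by exists C; rewrite /child h1 h2 eqxx.
Qed.

Lemma ref_child_child A : cl A -> (1 < #|A|)%N -> child (ref_child A) A.
Proof.
move=> hA hc; rewrite /ref_child; case: pickP => [C /andP [] //|_].
case: pickP => [C //|hn]; by case: (exists_child hA hc) => C; rewrite hn.
Qed.

Lemma ref_child_nspans A C : child C A -> ~~ spans C A -> ~~ spans (ref_child A) A.
Proof.
move=> h1 h2; rewrite /ref_child; case: pickP => [C' /andP [] //|hn].
by have := hn C; rewrite h1 h2.
Qed.

Lemma not_child1 (A C : {set L}) : #|A| = 1%N -> ~~ child C A.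
Proof.
move=> h1; apply/negP => /childP [hC _ /proper_card].
by have := card_cluster_gt0 ultra_dissim_dis hC; rewrite h1; lia.
Qed.

Lemma ref_child1 (A : {set L}) : #|A| = 1%N -> ref_child A = A.
Proof.
move=> h1; rewrite /ref_child.
case: pickP => [C /andP [h _]|_]; first by rewrite (negbTE (not_child1 C h1)) in h.
by case: pickP => [C h|_] //; rewrite (negbTE (not_child1 C h1)) in h.
Qed.

Lemma step_child C : cl C -> (1 < #|C|)%N ->
  cl (step C) /\ parent_cluster dis (step C) = Some C.
Proof.
move=> hC hc; suff /andP [-> /eqP ->] : child (step C) C by [].
rewrite /step; case: (parent_cluster dis C) => [A|]; last exact: ref_child_child.
case: ifP => _; last exact: ref_child_child.
by case: pickP => [D /andP [] //|_]; exact: ref_child_child.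
Qed.

Lemma step1 (C : {set L}) : #|C| = 1%N -> step C = C.
Proof.
move=> h1; rewrite /step; case: (parent_cluster dis C) => [A|]; last exact: ref_child1.
case: ifP => _; last exact: ref_child1.
case: pickP => [D /andP [h _]|_] /=; last exact: ref_child1.
by rewrite (negbTE (not_child1 D h1)) in h.
Qed.

Local Notation dl := (dleaf l0 step).
Let mem_dl := @mem_dleaf _ _ _ ultra_dissim_dis l0 step step_child step1.
Let dl_step := @dleaf_step _ _ _ ultra_dissim_dis l0 step step_child step1.
Let dl_sub := @dleaf_sub _ _ _ ultra_dissim_dis l0 step step_child step1.
Let dl1 := @dleaf1 _ _ _ ultra_dissim_dis l0 step step_child step1.

Definition VT' := ctree dis.
Definition parT' : VT' -> VT' := @cpar _ _ dis.
Definition tauT' : VT' -> R := @ctime _ _ dis (tauS zS) lift.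
Definition lf' (x : L) : VT' := node dis [set x].

Definition mu' (v : VT') : VS + VS :=
  if v is Some A then lineage zS parS tauS (tauT' v) (mS (sigma (dl (val A)))) else inl zS.

Lemma planted_parT' : planted_phylo None parT'.
Proof. exact: planted_cpar ultra_dissim_dis l0. Qed.

Lemma time_map_tauT' : time_map parT' tauT'.
Proof. exact: (time_map_ctime ultra_dissim_dis l0 lift_lt_proper lift_lt_root). Qed.

Lemma tauT'E (A : cnode dis) : tauT' (Some A) = dm (val A) + lift (val A).
Proof. by []. Qed.

Lemma lf'E x : exists a : cnode dis, lf' x = Some a /\ val a = [set x].
Proof. exact: node_val (cluster1 ultra_dissim_dis x). Qed.

Lemma tauT'_lf x : tauT' (lf' x) = tauS (mS (sigma x)).
Proof.
case: (lf'E x) => a1 [-> h]; rewrite tauT'E h /lift shifted1 addr0.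
by rewrite (diam1 ultra_dissim_dis) disxx tauT_lf.
Qed.

Lemma mu'_lf x : mu' (lf' x) = inl (mS (sigma x)).
Proof.
have := tauT'_lf x; case: (lf'E x) => a1 [-> h] ht.
by rewrite /mu' h dl1 ht; apply: lineage_vertex => //; apply: anc_refl.
Qed.

Lemma tauT'_bounds (A : cnode dis) :
  tauS (mS (sigma (dl (val A)))) <= tauT' (Some A) /\ tauT' (Some A) < tauS zS.
Proof.
split; last exact: lift_lt_root (valP A).
rewrite tauT'E -tauT_lf -disxx -(diam1 ultra_dissim_dis).
have := lift_bounds (val A); have : dm [set dl (val A)] <= dm (val A).
  by apply: (le_diam ultra_dissim_dis (cluster1 ultra_dissim_dis _) _ (valP A));
     rewrite sub1set mem_dl ?(valP A).
lra.
Qed.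

Lemma tauT'_gt_leaf (A : cnode dis) : (1 < #|val A|)%N ->
  tauS (mS (sigma (dl (val A)))) < tauT' (Some A).
Proof.
move=> hc; have := disxx_lt_diam (valP A) hc (mem_dl (valP A)).
by rewrite tauT'E disxx tauT_lf; have := lift_bounds (val A); lra.
Qed.

Lemma mu'P (A : cnode dis) : let m := mS (sigma (dl (val A))) in
  (exists s, [/\ mu' (Some A) = inl s, anc parS m s & tauS s = tauT' (Some A)]) \/
  (exists v, [/\ mu' (Some A) = inr v, anc parS m v, v != zS, tauS v < tauT' (Some A)
                & tauT' (Some A) < tauS (parS v)]).
Proof. by case: (tauT'_bounds A) => h1 h2; apply: lineageP. Qed.

Lemma lf'_inj : injective lf'.
Proof.
move=> x y; case: (lf'E x) => a1 [-> h1]; case: (lf'E y) => a2 [-> h2] [e].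
by apply/set1P; rewrite -h2 -e h1 set11.
Qed.

Lemma lf'_leaf x : lf' x \in leaves None parT'.
Proof.
by case: (lf'E x) => a1 [-> h]; rewrite /parT' (leaves_cpar ultra_dissim_dis l0) h cards1.
Qed.

Lemma leaves_parT' v : v \in leaves None parT' -> exists x, v = lf' x.
Proof.
case: v => [A|]; last by move/leaf_neq_z; rewrite eqxx.
rewrite /parT' (leaves_cpar ultra_dissim_dis l0) => /cards1P [x hx]; exists x.
by case: (lf'E x) => a1 [-> h1]; congr Some; apply: val_inj; rewrite hx h1.
Qed.

Lemma mu'_root v : mu' v = inl zS <-> v = None.
Proof.
split=> [|-> //]; case: v => [A|] // h; exfalso.
case: (mu'P A) => [[s [e _ ht]]|[v [e _ _ _ _]]]; rewrite e in h => //.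
by case: h ht => -> ht; case: (tauT'_bounds A) => _; rewrite -ht ltxx.
Qed.

Lemma mu'_leaf v :
  (exists2 s, mu' v = inl s & s \in leaves zS parS) <-> v \in leaves None parT'.
Proof.
split=> [[s]|/leaves_parT' [x ->]]; last by rewrite mu'_lf; exists (mS (sigma x)).
case: v => [A|]; last by move=> [<-] /leaf_neq_z; rewrite eqxx.
case: (mu'P A) => [[s' [-> hanc ht]] [<-] hleaf|[v [-> _ _ _ _]] //].
rewrite /parT' (leaves_cpar ultra_dissim_dis l0); apply: contraT => hc.
have hc1 : (1 < #|val A|)%N.
  by rewrite ltn_neqAle eq_sym hc; apply: (card_cluster_gt0 ultra_dissim_dis (valP A)).
by have := tauT'_gt_leaf hc1; rewrite (anc_leaf HpS hleaf hanc) ht ltxx.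
Qed.

Lemma relaxed' : relaxed_scenario sigma None parT' zS parS tauT' tauS lf' mS mu'.
Proof.
refine (conj (And4 _ _ _ _) (conj (And3 _ _ _) (And4 _ _ _ _))).
- exact: planted_parT'.
- exact: HpS.
- exact: time_map_tauT'.
- exact: HtS.
- split; first exact: lf'_inj.
  by move=> v; split; [exact: leaves_parT' | case=> x ->; exact: lf'_leaf].
- by split; [exact: mS_inj | exact: mS_leaf].
- by move=> [A|] //; case: (mu'P A) => [[s [-> _ _]]|[v [-> _ h _ _]]].
- exact: mu'_root.
- by split; [exact: mu'_leaf | exact: mu'_lf].
- move=> [A|] s; last by case=> <-.
  by case: (mu'P A) => [[s' [-> _ ht]] [<-]|[v [-> _ _ _ _]]].
- move=> [A|] v //.
  by case: (mu'P A) => [[s' [-> _ _]]|[v' [-> _ _ h1 h2]] [<-]] //; rewrite h1 h2.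
Qed.

Lemma lca_lf' x y : exists w : cnode dis,
  lca None parT' (lf' x) (lf' y) = Some w /\ val w = ball dis x (dis x y).
Proof.
rewrite /lf' /parT' (lca_cpar_node1 ultra_dissim_dis l0); apply: node_val.
exact: cluster_ball.
Qed.

Lemma tauT'_lca_lf' x y : let t := tauT' (lca None parT' (lf' x) (lf' y)) in
  [/\ (t < b x y) = (a x y < b x y), (t == b x y) = (a x y == b x y)
    & (b x y < t) = (b x y < a x y)].
Proof.
case: (lca_lf' x y) => w [-> hw]; cbv zeta.
rewrite tauT'E hw (diam_ball ultra_dissim_dis (erefl _)).
have [hF0 hF] := andP (lift_bounds (ball dis x (dis x y))).
set F := lift _ in hF0 hF *.
have := eta_lt_eps; have := eps_lt_delta; have := eps_gt0 => h1 h2 h3.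
apply: cmp_transfer => hab.
- case: (dis_cases x y) => ->; last lra.
  by have := Hgap (is_time_a x y) (is_time_b x y) hab; lra.
- by have := a_le_dis x y; lra.
have hd : dis x y = b x y by rewrite /dis hab; apply/max_idPl; lra.
suff -> : F = 0 by rewrite addr0.
rewrite /F /lift; case: ifP => // /andP [_].
move=> /forall_inP /(_ x (mem_ball_center ultra_dissim_dis x y)).
move=> /forall_inP /(_ y (mem_ball_dissim dis x y)).
by rewrite (diam_ball ultra_dissim_dis (erefl _)) hd ltxx.
Qed.

Lemma explains' Glt Geq Ggt :
  explains sigma zT parT zS parS tauT tauS lf mS Glt Geq Ggt ->
  explains sigma None parT' zS parS tauT' tauS lf' mS Glt Geq Ggt.
Proof.
move=> hE x y hxy; have := hE x y hxy; cbv zeta => -[-> -> ->].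
by have [-> -> ->] := tauT'_lca_lf' x y.
Qed.

(* A cluster sharing its designated leaf with its parent lies on the same lineage, earlier. *)
Lemma no_hgt_same_dleaf (B : cnode dis) :
  (forall P : cnode dis, parT' (Some B) = Some P -> dl (val P) = dl (val B)) ->
  ~~ hgt parT' parS mu' (Some B).
Proof.
move=> hP; rewrite /hgt negbK /comparable_el; apply/orP; right.
have [h1 h2] := tauT'_bounds B.
case: (cparP ultra_dissim_dis l0 B) => [[_ e]|[P [e _ hs]]]; rewrite /parT' e.
  exact: (lineage_le_z HpS HtS h1 h2).
have [h3 h4] := tauT'_bounds P.
rewrite /mu' (hP P e); apply: (lineage_mono HpS HtS h1) => //.
apply/ltW/time_map_tauT'; first by rewrite -e; apply: anc_par.
by apply: contraTneq hs => [[->]]; rewrite properxx.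
Qed.

Lemma no_hgt_setT (B : cnode dis) : val B = setT -> ~~ hgt parT' parS mu' (Some B).
Proof. by move=> hT; apply: no_hgt_same_dleaf => P; rewrite /parT' /= hT parent_clusterT. Qed.

Lemma no_hgt_inside (A B : cnode dis) : dl (val A) \in val B -> val B \proper val A ->
  ~~ hgt parT' parS mu' (Some B).
Proof.
move=> hx hBA; have hdB := dl_sub (valP A) (valP B) (proper_sub hBA) hx.
apply: no_hgt_same_dleaf => P; rewrite /parT'.
case: (cparP ultra_dissim_dis l0 B) => [[_ ->] //|[P' [-> hp hs]] [<-]].
have [_ _ hmin] := parent_cluster_spec hp.
rewrite hdB; apply: (dl_sub (valP A) (valP P') (hmin _ (valP A) hBA)).
by rewrite -hdB; apply: (subsetP (proper_sub hs)); apply: mem_dl (valP B).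
Qed.

Lemma anc_lf'E x (B : cnode dis) : anc parT' (lf' x) (Some B) = (x \in val B).
Proof.
case: (lf'E x) => a1 [-> h]; apply/idP/idP => [/(anc_cpar_subset ultra_dissim_dis l0)|hx].
  by rewrite h sub1set.
by apply: (subset_anc_cpar ultra_dissim_dis l0); rewrite h sub1set.
Qed.

Lemma witness_lf' x v : anc parT' (lf' x) v ->
  (forall B : cnode dis, x \in val B -> anc parT' (Some B) v -> Some B != v ->
     ~~ hgt parT' parS mu' (Some B)) ->
  witness None parT' parS mu' (lf' x) v.
Proof.
move=> hxv h; split => //; first exact: lf'_leaf.
move=> [B|] h1 h2 h3 h4; last by rewrite eqxx in h4.
by apply: h h2 h3; rewrite -anc_lf'E.
Qed.

Lemma proper_of_anc (A B : cnode dis) :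
  anc parT' (Some B) (Some A) -> Some B != Some A -> val B \proper val A.
Proof.
move=> h hne; rewrite properEneq (anc_cpar_subset ultra_dissim_dis l0 h) andbT.
by apply: contraNneq hne => /val_inj ->.
Qed.

Lemma witness_dleaf (A : cnode dis) : witness None parT' parS mu' (lf' (dl (val A))) (Some A).
Proof.
apply: witness_lf' => [|B hx hBA hne]; first by rewrite anc_lf'E mem_dl ?(valP A).
exact: no_hgt_inside hx (proper_of_anc hBA hne).
Qed.

Lemma witness_root : witness None parT' parS mu' (lf' (dl setT)) None.
Proof.
apply: witness_lf' => [|B hx _ _]; first exact: anc_cpar_None ultra_dissim_dis l0 _.
case: (eqVneq (val B) setT) => [hT|hBT]; first exact: no_hgt_setT.
by apply: (@no_hgt_inside (ctop dis l0) B hx); rewrite properT.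
Qed.

Lemma witness_child (A C : cnode dis) : parent_cluster dis (val C) = Some (val A) ->
  comparable_el parS (mu' (Some A)) (mu' (Some C)) ->
  witness None parT' parS mu' (lf' (dl (val C))) (Some A).
Proof.
move=> hpC hcmp; have [_ hCA _] := parent_cluster_spec hpC; have hx := mem_dl (valP C).
apply: witness_lf' => [|B hxB hBA hne]; first by rewrite anc_lf'E (subsetP (proper_sub hCA)).
have hBC := sub_child_cluster ultra_dissim_dis hpC (valP C) (valP B) hxB hx
  (proper_of_anc hBA hne).
case: (eqVneq (val B) (val C)) => [/val_inj ->|hne'].
  by rewrite /hgt negbK /parT' (cparE hpC) /node valK.
by apply: no_hgt_inside hxB _; rewrite properEneq hne' hBC.
Qed.

Lemma mu'_inner_vertex (A : cnode dis) s : mu' (Some A) = inl s -> inner zS parS s ->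
  [/\ tauS s = dm (val A), tauT' (Some A) = dm (val A), (1 < #|val A|)%N,
      spans (val A) (val A) & forall x, x \in val A -> anc parS (mS (sigma x)) s].
Proof.
move=> hmu hin.
case: (mu'P A) => [[s' [e hanc ht]]|[v [e _ _ _ _]]]; rewrite hmu in e; last by [].
case: e => es; subst s'.
have hc : (1 < #|val A|)%N.
  rewrite ltn_neqAle eq_sym (card_cluster_gt0 ultra_dissim_dis (valP A)) andbT.
  apply: contraTN hin => h1.
  have : Some A \in leaves None parT' by rewrite /parT' (leaves_cpar ultra_dissim_dis l0).
  by case/mu'_leaf => s' + hs'; rewrite hmu => -[->]; rewrite /inner hs' andbF.
have hnsh : ~~ shifted (val A).
  apply/negP => hsh; have := shifted_off_species s hsh.
  by rewrite ht tauT'E /lift hsh eqxx.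
have ht' : tauS s = dm (val A) by rewrite ht tauT'E /lift (negbTE hnsh) addr0.
have hbA p q : p \in val A -> q \in val A -> b p q <= dm (val A).
  exact: b_le_diam (valP A) ht'.
have hex : [exists s0, tauS s0 == dm (val A)] by apply/existsP; exists s; rewrite ht'.
split => //; first by rewrite -ht.
  move: hnsh; rewrite /shifted hex /= => /forall_inPn [p hp /forall_inPn [q hq]].
  rewrite -leNgt => hpq.
  by apply/exists_inP; exists p => //; apply/exists_inP; exists q => //; rewrite eq_le hbA.
move=> x hx; set m := mS (sigma (dl (val A))) in hanc *.
apply: anc_trans (anc_lcar HpS m (mS (sigma x))) _.
apply: (anc_of_time_le HtS (anc_lcal HpS m _) hanc).
by rewrite ht'; apply: hbA => //; apply: mem_dl (valP A).
Qed.

Lemma parT'_child (A C : cnode dis) : parent_cluster dis (val C) = Some (val A) ->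
  parT' (Some C) = Some A.
Proof. by move=> hp; rewrite /parT' (cparE hp) /node valK. Qed.

Lemma mu'_children_lt u s : mu' u = inl s -> inner zS parS s ->
  forall v, v \in children parT' u -> lt_el parS (mu' v) (mu' u).
Proof.
case: u => [A|] hmu hin; last by move: hin; case: hmu => <-; rewrite /inner eqxx.
have [hts htau _ _ hcol] := mu'_inner_vertex hmu hin.
move=> [C|] hv; last by rewrite (negbTE (None_notin_children _)) in hv.
move: hv; rewrite /parT' (children_cpar ultra_dissim_dis l0) => /eqP hp.
have [_ hCA _] := parent_cluster_spec hp; have [h1 h2] := tauT'_bounds C.
rewrite hmu; apply: (lt_lineage HpS HtS h1 h2).
  by apply/hcol/(subsetP (proper_sub hCA))/mem_dl/(valP C).
rewrite hts -htau; apply: time_map_tauT'; first by rewrite -(parT'_child hp); apply: anc_par.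
by apply: contraTneq hCA => -[->]; rewrite properxx.
Qed.

Lemma b_meet_pair t p q x : b p q = t -> b p x <= t -> b q x <= t -> b x p = t \/ b x q = t.
Proof.
move=> hpq hp hq; case: (eqVneq (b p x) t) => [e|hne]; first by left; rewrite bC.
right; apply/eqP; rewrite eq_le bC hq leNgt; apply/negP => hlt.
have hp' : b p x < t by rewrite lt_neqAle hne hp.
by rewrite bC in hlt; have := b_lt_trans hp' hlt; rewrite hpq ltxx.
Qed.

Lemma diam_window C s : cl C -> tauS s - eps <= dm C -> dm C < tauS s ->
  dm C = tauS s - eps.
Proof.
move=> /diam_dis [x [y ->]] h1 h2; have := eps_gt0; have := eps_lt_delta.
case: (dis_cases x y) => e; rewrite e in h1 h2 *.
  by have := Hgap (is_time_a x y) (is_time_S s) h2; lra.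
case: (ltrgtP (b x y) (tauS s)) => hb; last by rewrite hb.
  by have := Hgap (is_time_b x y) (is_time_S s) hb; lra.
by have := Hgap (is_time_S s) (is_time_b x y) hb; lra.
Qed.

Section InnerCluster.
Variables (A : {set L}) (s : VS).
Hypotheses (hA : cl A) (hs : tauS s = dm A) (hc : (1 < #|A|)%N) (hspan : spans A A).

Let hbA p q : p \in A -> q \in A -> b p q <= dm A. Proof. exact: b_le_diam hA hs. Qed.

Lemma spans_card (C : {set L}) : C \subset A -> spans C A -> (1 < #|C|)%N.
Proof.
move=> hCA /exists_inP [x hx /exists_inP [y hy hxy]].
apply/card_gt1P; exists x, y; split => //; apply: contraTneq hxy => <-.
by rewrite bxx -disxx (lt_eqF (disxx_lt_diam hA hc (subsetP hCA x hx))).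
Qed.

(* A spanning child has diameter [tauS s - eps] by [diam_window]; a spanning grandchild
   would need a diameter in the same window, but strictly smaller. *)
Lemma spans_child_nspans C D : child C A -> spans C A -> child D C -> ~~ spans D A.
Proof.
move=> /childP [hC _ hCA] hm /childP [hD _ hDC].
have low E : cl E -> E \proper A -> spans E A -> tauS s - eps <= dm E /\ dm E < tauS s.
  move=> hE hEA /exists_inP [x hx /exists_inP [y hy /eqP hxy]]; split.
    rewrite hs -hxy; have := b_le_dis x y.
    by have := dissim_le_diam ultra_dissim_dis hE hx hy; lra.
  by rewrite hs; exact: (lt_diam ultra_dissim_dis hE hEA hA).
have [h1 h2] := low C hC hCA hm; have eC := diam_window hC h1 h2.
apply/negP => /(low D hD (proper_trans hDC hCA)) [h3 _].
by have := lt_diam ultra_dissim_dis hD hDC hC; rewrite eC; lra.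
Qed.

Lemma nspans_lt (C : {set L}) x y : C \subset A -> ~~ spans C A -> x \in C -> y \in C ->
  b x y < dm A.
Proof.
move=> hCA hm hx hy; rewrite lt_neqAle hbA ?(subsetP hCA) // andbT.
apply: contraNneq hm => e.
by apply/exists_inP; exists x => //; apply/exists_inP; exists y => //; rewrite e.
Qed.

Lemma ref_set_spec :
  [/\ dl (ref_child A) \in ref_set A, ref_set A \subset A &
      forall x y, x \in ref_set A -> y \in ref_set A -> b x y < dm A].
Proof.
have hk := ref_child_child hA hc; have [hR _ hRA] := childP hk.
rewrite /ref_set; case: ifP => hm; last first.
  split; [exact: mem_dl | exact: proper_sub |] => x y hx hy.
  by apply: (nspans_lt (proper_sub hRA)) => //; rewrite hm.
have hcR := spans_card (proper_sub hRA) hm; have hkk := ref_child_child hR hcR.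
have [hRR _ hRRR] := childP hkk.
have hsub : ref_child (ref_child A) \subset A.
  exact: subset_trans (proper_sub hRRR) (proper_sub hRA).
split => // [|x y hx hy]; last first.
  by apply: (nspans_lt hsub) => //; exact: spans_child_nspans hk hm hkk.
have -> : ref_child (ref_child A) = step (ref_child A).
  by rewrite /step; case/andP: hk => _ /eqP ->; rewrite eqxx andbF.
by rewrite -dl_step //; apply: mem_dl; case: (step_child hR hcR).
Qed.

Let x1 := dl (ref_child A).

Lemma partner_spanning_child C : child C A -> spans C A -> C != ref_child A ->
  b x1 (dl C) = dm A.
Proof.
move=> hCA hm hne; have [hC _ hpCA] := childP hCA.
have [hx1 hrefA hrefl] := ref_set_spec.
have hx1A : x1 \in A := subsetP hrefA x1 hx1.
have hCA' x : x \in C -> x \in A := subsetP (proper_sub hpCA) x.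
have [r hr hrx] : exists2 r, r \in C & b x1 r = dm A.
  case/exists_inP: (hm) => p hp /exists_inP [q hq /eqP hpq].
  by case: (b_meet_pair hpq (hbA (hCA' p hp) hx1A) (hbA (hCA' q hq) hx1A)) => e;
    [exists p | exists q].
have hcC := spans_card (proper_sub hpCA) hm.
have [D [hD hpD hrD]] := exists_child_cluster ultra_dissim_dis l0 hC hr hcC.
have hpar : parent_cluster dis C = Some A by case/andP: hCA => _ /eqP.
set P := fun D => child D C && [exists x in D, exists y in ref_set A, b x y == dm A].
have [D' hD'] : exists D', P D' /\ step C = D'.
  rewrite /step hpar hm hne /=; case: pickP => [D' hD'|hn]; first by exists D'.
  exfalso; move/negbT/negP: (hn D); apply; rewrite /child hD hpD eqxx /=.
  by apply/exists_inP; exists r => //; apply/exists_inP; exists x1; rewrite // bC hrx.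
case: hD' => /andP [hD'C /exists_inP [u hu /exists_inP [v hv /eqP huv]]] eD'.
have [hD'c _ hpD'C] := childP hD'C.
have hdl : dl C = dl D' by rewrite -eD' dl_step.
have hdlD' := mem_dl hD'c.
have hD'A : D' \subset A := subset_trans (proper_sub hpD'C) (proper_sub hpCA).
have hdlA : dl C \in A by rewrite hdl; apply: (subsetP hD'A).
apply/eqP; rewrite eq_le hbA //= leNgt; apply/negP => hlt.
have h1 : b u (dl D') < dm A := nspans_lt hD'A (spans_child_nspans hCA hm hD'C) hu hdlD'.
have h2 : b (dl D') x1 < dm A by rewrite bC -hdl.
have h3 : b x1 v < dm A := hrefl _ _ hx1 hv.
by have := b_lt_trans (b_lt_trans h1 h2) h3; rewrite huv ltxx.
Qed.

Lemma partner_non_spanning_children :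
  (forall C, child C A -> C != ref_child A -> ~~ spans C A) ->
  exists X, [/\ child X A, X != ref_child A & b x1 (dl X) = dm A].
Proof.
move=> hno; have hk := ref_child_child hA hc; have [hR _ hRA] := childP hk.
have hx1A : x1 \in A := subsetP (proper_sub hRA) x1 (mem_dl hR).
have child_of x : x \in A -> exists2 X, child X A & x \in X.
  move=> hx; have [X [hX hpX hxX]] := exists_child_cluster ultra_dissim_dis l0 hA hx hc.
  by exists X; rewrite // /child hX hpX eqxx.
have hmR : ~~ spans (ref_child A) A.
  have [_ [w hwA hwR]] := properP hRA; have [X hkX hwX] := child_of w hwA.
  apply: ref_child_nspans hkX (hno X hkX _).
  by apply: contraNneq hwR => <-.
have [r hr hrx] : exists2 r, r \in A & b x1 r = dm A.
  case/exists_inP: hspan => p hp /exists_inP [q hq /eqP hpq].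
  by case: (b_meet_pair hpq (hbA hp hx1A) (hbA hq hx1A)) => e; [exists p | exists q].
have [X hkX hrX] := child_of r hr; have [hX _ hXA] := childP hkX.
have hXR : X != ref_child A.
  apply: contraTneq hrX => ->; apply/negP => hrR.
  by have := nspans_lt (proper_sub hRA) hmR (mem_dl hR) hrR; rewrite hrx ltxx.
exists X; split => //; have hdX := mem_dl hX.
have hdXA : dl X \in A := subsetP (proper_sub hXA) _ hdX.
apply/eqP; rewrite eq_le hbA //= leNgt; apply/negP => hlt.
have h2 : b (dl X) r < dm A := nspans_lt (proper_sub hXA) (hno X hkX hXR) hdX hrX.
by have := b_lt_trans hlt h2; rewrite hrx ltxx.
Qed.

Lemma exists_partner_child : exists X, [/\ child X A, X != ref_child A & b x1 (dl X) = dm A].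
Proof.
case: (boolP [exists C, [&& child C A, spans C A & C != ref_child A]]) => [|hno].
  by case/existsP => C /and3P [h1 h2 h3]; exists C; split => //; apply: partner_spanning_child.
apply: partner_non_spanning_children => C h1 h2; apply: contraNN hno => h3.
by apply/existsP; exists C; rewrite h1 h2 h3.
Qed.

End InnerCluster.

Lemma witness_of_child (A : cnode dis) s C : mu' (Some A) = inl s -> inner zS parS s ->
  child C (val A) -> witness None parT' parS mu' (lf' (dl C)) (Some A).
Proof.
move=> hmu hin /andP [hC /eqP hp]; have [r [_ hrC]] := node_val hC; subst C.
apply: (witness_child hp).
have hch : Some r \in children parT' (Some A).
  by rewrite /parT' (children_cpar ultra_dissim_dis l0) hp.
by case/andP: (mu'_children_lt hmu hin hch) => hle _; rewrite /comparable_el hle orbT.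
Qed.

Lemma mu'_inner_pair u s : mu' u = inl s -> inner zS parS s ->
  exists x y : L, [/\ lca None parT' (lf' x) (lf' y) = u,
    witness None parT' parS mu' (lf' x) u, witness None parT' parS mu' (lf' y) u &
    s = lca zS parS (mS (sigma x)) (mS (sigma y))].
Proof.
case: u => [A|] hmu hin; last by move: hin; case: hmu => <-; rewrite /inner eqxx.
have [hts _ hc hspan hcol] := mu'_inner_vertex hmu hin.
have [X [hkX hXR hb]] := exists_partner_child (valP A) hts hc hspan.
have hkR := ref_child_child (valP A) hc.
have [hR _ hpR] := childP hkR; have [hX _ hpX] := childP hkX.
exists (dl (ref_child (val A))), (dl X); split.
- case: (lca_lf' (dl (ref_child (val A))) (dl X)) => w [-> hw]; congr Some; apply: val_inj.
  rewrite hw; apply: (ball_distinct_children ultra_dissim_dis _ _ hR hX).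
  + by case/andP: hkR => _ /eqP.
  + by case/andP: hkX => _ /eqP.
  + by rewrite eq_sym.
  + exact: mem_dl.
  + exact: mem_dl.
- exact: witness_of_child hmu hin hkR.
- exact: witness_of_child hmu hin hkX.
- set x := dl (ref_child (val A)).
  have hx : x \in val A := subsetP (proper_sub hpR) _ (mem_dl hR).
  apply: (anc_time_inj HtS (hcol _ hx) (anc_lcal HpS _ _)).
  by rewrite hts -hb.
Qed.

Lemma restricted' : restricted_scenario sigma None parT' zS parS tauT' tauS lf' mS mu'.
Proof.
split; [exact: relaxed' | | exact: mu'_children_lt | exact: mu'_inner_pair].
case=> [A|]; first by exists (lf' (dl (val A))); apply: witness_dleaf.
by exists (lf' (dl setT)); apply: witness_root.
Qed.

Lemma explainable_restricted_of_relaxed Glt Geq Ggt :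
  explains sigma zT parT zS parS tauT tauS lf mS Glt Geq Ggt ->
  explainable_restricted R sigma Glt Geq Ggt.
Proof.
move=> hE; exists VT', VS, None, parT', zS, parS, tauT', tauS, lf', mS, mu'.
by split; [exact: restricted' | exact: explains'].
Qed.

End Restriction.

Lemma scenario_time_gap (R : realType) (VT VS : finType) (tauT : VT -> R) (tauS : VS -> R) :
  exists2 delta, 0 < delta & forall u v, is_time tauT tauS u -> is_time tauT tauS v ->
    u < v -> u + delta <= v.
Proof.
pose time (p : VT + VS) := match p with inl v => tauT v | inr s => tauS s end.
have [delta hd hg] := exists_min_gap time; exists delta => // u v.
have htime w : is_time tauT tauS w -> exists p, w = time p.
  by case=> -[p ->]; [exists (inl p) | exists (inr p)].
by move=> /htime [p ->] /htime [q ->]; apply: hg.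
Qed.

Lemma relaxed_scenario_inhabited (R : realType) (L M : finType) (sigma : L -> M)
  (VT VS : finType) (zT : VT) (parT : VT -> VT) (zS : VS) (parS : VS -> VS)
  (tauT : VT -> R) (tauS : VS -> R) (lf : L -> VT) (mS : M -> VS) (mu : VT -> VS + VS) :
  relaxed_scenario sigma zT parT zS parS tauT tauS lf mS mu -> inhabited L.
Proof.
case=> [[hpT _ _ _] [[[_ hl] _ _] _]]; have [v hv] := exists_leaf hpT.
by have [l _] := (hl v).1 hv; exists.
Qed.

Theorem theorem3 (R : realType) (L M : finType) (sigma : L -> M)
  (Glt Geq Ggt : rel L) :
  graph_3partition Glt Geq Ggt ->
  (explainable_relaxed R sigma Glt Geq Ggt <->
   explainable_restricted R sigma Glt Geq Ggt).
Proof.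
(* The equivalence holds for any three relations. *)
move=> _; split; last first.
  case=> VT [VS [zT [parT [zS [parS [tauT [tauS [lf [mS [mu [[hrel _ _ _] hE]]]]]]]]]]].
  by exists VT, VS, zT, parT, zS, parS, tauT, tauS, lf, mS, mu.
case=> VT [VS [zT [parT [zS [parS [tauT [tauS [lf [mS [mu [hrel hE]]]]]]]]]]].
have [l0] := relaxed_scenario_inhabited hrel.
have [delta hd hgap] := scenario_time_gap tauT tauS.
exact: (explainable_restricted_of_relaxed hrel hd hgap l0 hE).
Qed.
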